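(* For integers $m\ge1$ and $0\le k\le m$, the circle-valued Morse function $f\colon K_{m,k}\to S^1$ induces a short exact sequence $1\to F_{m+k}\to G_{m,k}\to\mathbb Z\to1$, where $F_{m+k}$ is a free group of rank $m+k$ (and the map $G_{m,k}\to\mathbb Z$ sends every generator $a_i$ to a fixed generator of $\mathbb Z$).
   Context: $G_{m,k}=\langle a_1,\dots,a_{m+k+1}\mid [a_i,a_{i+1}]=1\ (1\le i\le m),\ a_{m+j+1}^{-1}a_ja_{m+j+1}=a_{m+j}\ (1\le j\le k)\rangle$, and $K_{m,k}$ is its presentation $2$–complex (one $0$–cell, one $1$–cell per generator, one square per relator). Give $S^1$ the CW structure with one $0$–cell and one $1$–cell; $f$ sends the $0$–cell of $K_{m,k}$ to the $0$–cell of $S^1$, maps each $1$–cell homeomorphically onto the $1$–cell of $S^1$ (in its orientation), and extends linearly over the square $2$–cells (so that its lift to universal covers is a Morse function whose value on each square is affine). *)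

(* Groups are MathComp's (possibly infinite) [groupType]
   from boot/monoid.v; group presentations and free groups are given by
   their universal properties. *)
From HB Require Import structures.
From mathcomp Require Import all_boot all_order all_algebra.
Set Implicit Arguments. Unset Strict Implicit. Unset Printing Implicit Defensive.

Definition is_ghom (G H : groupType) (f : G -> H) : Prop :=
  forall x y : G, f (x * y)%g = (f x * f y)%g.

Definition is_ghom_on (G H : groupType) (N : G -> Prop) (f : G -> H) : Prop :=
  forall x y : G, N x -> N y -> f (x * y)%g = (f x * f y)%g.

(* the relators of G_{m,k} evaluated on b_1, ..., b_{m+k+1} (1-based) :
   [b_i, b_{i+1}] = 1 (1 <= i <= m) and
   b_{m+j+1}^{-1} b_j b_{m+j+1} = b_{m+j} (1 <= j <= k),
   with [x,y] = x^{-1} y^{-1} x y. *)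
Definition Gmk_relations (m k : nat) (H : groupType) (b : nat -> H) : Prop :=
  (forall i : nat, (1 <= i <= m)%N ->
     ((b i)^-1 * (b i.+1)^-1 * b i * b i.+1)%g = 1%g) /\
  (forall j : nat, (1 <= j <= k)%N ->
     ((b (m + j + 1)%N)^-1 * b j * b (m + j + 1)%N)%g = b (m + j)%N).

Definition presents_Gmk (m k : nat) (G : groupType) (a : nat -> G) : Prop :=
  Gmk_relations m k a /\
  forall (H : groupType) (b : nat -> H), Gmk_relations m k b ->
    (exists f : G -> H, is_ghom f /\
        forall i, (1 <= i <= m + k + 1)%N -> f (a i) = b i) /\
    (forall f g : G -> H, is_ghom f -> is_ghom g ->
        (forall i, (1 <= i <= m + k + 1)%N -> f (a i) = g (a i)) ->
        forall u, f u = g u).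

Definition free_basis_of (G : groupType) (N : G -> Prop) (n : nat)
    (x : 'I_n -> G) : Prop :=
  (forall i, N (x i)) /\
  forall (H : groupType) (b : 'I_n -> H),
    (exists f : G -> H, is_ghom_on N f /\ forall i, f (x i) = b i) /\
    (forall f g : G -> H, is_ghom_on N f -> is_ghom_on N g ->
        (forall i, f (x i) = g (x i)) -> forall u, N u -> f u = g u).

(* Let t = a_1 and let N be the kernel of phi.  Each relation of G_{m,k} has
   the uniform shape a_{p i} a_{i+1} = a_{i+1} a_i (1 <= i <= m+k) with
   p i <= i.  Generation: the elements x_o = a_{o+2} t^-1 lie in N, and by
   induction on i the relations show that conjugation by t and by t^-1 maps
   every a_i t^-1 into <x>; hence every element of G is w t^n with w in <x>,
   and phi forces n = 0 on N.  Freeness: given targets b_o in a group H, the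
   relations are solved in the wreath product H wr Z = H^Z x| Z by elements
   (g_i, 1), where g_{i+1} is determined by g_{p i}, g_i and the value
   g_{i+1}(0) = b_{i-1}; the induced homomorphism F : G -> H wr Z has
   second component phi, so u |-> (F u)(0) is a homomorphism on N sending
   x_o to b_o. *)
From HB Require Import structures.
From mathcomp Require Import all_boot all_order all_algebra zify boolp.
Set Implicit Arguments. Unset Strict Implicit. Unset Printing Implicit Defensive.
Import GRing.Theory.
Local Open Scope group_scope.

Section Homomorphisms.
Variables (G H : groupType) (N : G -> Prop) (f : G -> H).

Lemma ghom_on1 : N 1 -> is_ghom_on N f -> f 1 = 1.
Proof. by move=> N1 hf; apply: (@mulgI _ (f 1)); rewrite -hf // !mulg1. Qed.

Lemma ghom_onV x : N 1 -> N x -> N x^-1 -> is_ghom_on N f -> f x^-1 = (f x)^-1.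
Proof.
by move=> N1 Nx NVx hf; apply/esym/mulg1_eq; rewrite -hf // mulgV ghom_on1.
Qed.

End Homomorphisms.

Lemma ghom1 (G H : groupType) (f : G -> H) : is_ghom f -> f 1 = 1.
Proof. by move=> hf; apply: (@ghom_on1 _ _ (fun _ => True)) => // x y _ _. Qed.

Lemma ghomV (G H : groupType) (f : G -> H) x : is_ghom f -> f x^-1 = (f x)^-1.
Proof. by move=> hf; apply: (@ghom_onV _ _ (fun _ => True)) => // ? ? _ _. Qed.

Section AdditiveHomomorphisms.
Variables (G : groupType) (V : zmodType) (phi : G -> V).
Hypothesis phiM : forall x y, phi (x * y) = (phi x + phi y)%R.

Lemma ahom1 : phi 1 = 0%R.
Proof. by apply: (@addrI _ (phi 1)); rewrite addr0 -phiM mulg1. Qed.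

Lemma ahomV x : phi x^-1 = (- phi x)%R.
Proof. by apply/eqP; rewrite -addr_eq0 -phiM mulVg ahom1. Qed.

Lemma ahomX x n : phi (x ^+ n) = (phi x *+ n)%R.
Proof.
by elim: n => [|n IH]; rewrite ?expg0 ?ahom1 // expgSr phiM IH mulrSr.
Qed.

End AdditiveHomomorphisms.

Lemma commuteP (G : groupType) (x y : G) : x^-1 * y^-1 * x * y = 1 <-> commute x y.
Proof. by rewrite -!mulgA; split=> [/eqP/commgP|/commgP/eqP]. Qed.

Lemma conjg_eqP (G : groupType) (x y z : G) : y^-1 * x * y = z <-> x * y = y * z.
Proof.
by split=> [<-|E]; [rewrite -!mulgA mulVKg | rewrite -mulgA E mulKg].
Qed.

Definition partner (m i : nat) : nat := if (i <= m)%N then i else (i - m)%N.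

Lemma partner_le m i : (partner m i <= i)%N.
Proof. by rewrite /partner; case: ifP => // _; rewrite leq_subr. Qed.

Lemma partner_gt0 m i : (0 < i)%N -> (0 < partner m i)%N.
Proof.
by move=> i_gt0; rewrite /partner; case: (leqP i m) => // lt_mi; rewrite subn_gt0.
Qed.

Lemma Gmk_relationsP m k (H : groupType) (b : nat -> H) :
  Gmk_relations m k b <->
  forall i, (1 <= i <= m + k)%N -> b (partner m i) * b i.+1 = b i.+1 * b i.
Proof.
rewrite /partner; split=> [[hcomm hconj] i hi|hrel].
  case: ifP => him; first by apply/commuteP/hcomm; lia.
  have hj : (1 <= i - m <= k)%N by lia.
  by apply/conjg_eqP; have := hconj _ hj; rewrite subnKC ?addn1 //; lia.
split=> [i hi|j hj].
  by apply/commuteP; have := hrel i; rewrite ifT; [apply; lia | lia].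
apply/conjg_eqP; have := hrel (m + j)%N.
by rewrite ifF ?addKn ?addn1; [apply; lia | lia].
Qed.

Lemma Gmk_relations_ghom m k (G H : groupType) (f : G -> H) (a : nat -> G) :
  is_ghom f -> Gmk_relations m k a -> Gmk_relations m k (fun i => f (a i)).
Proof.
by move=> hf /Gmk_relationsP hrel; apply/Gmk_relationsP => i hi; rewrite -!hf hrel.
Qed.

Lemma Gmk_relations_const m k (H : groupType) (h : H) :
  Gmk_relations m k (fun _ => h).
Proof. by apply/Gmk_relationsP. Qed.

Section Generation.
Variables (G : groupType) (I : Type) (x : I -> G).

Inductive generated : G -> Prop :=
| generated1 : generated 1
| generated_mulr u i : generated u -> generated (u * x i)
| generated_mulVr u i : generated u -> generated (u * (x i)^-1).

Lemma generatedM u v : generated u -> generated v -> generated (u * v).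
Proof.
move=> hu; elim=> [|w i _ IH|w i _ IH]; first by rewrite mulg1.
  by rewrite mulgA; apply: generated_mulr.
by rewrite mulgA; apply: generated_mulVr.
Qed.

Lemma generated_gen i : generated (x i).
Proof. by rewrite -[x i]mul1g; apply/generated_mulr/generated1. Qed.

Lemma generatedV u : generated u -> generated u^-1.
Proof.
elim=> [|w i _ IH|w i _ IH]; first by rewrite invg1; apply: generated1.
  rewrite invgM; apply: generatedM => //.
  by rewrite -[_^-1]mul1g; apply/generated_mulVr/generated1.
by rewrite invgM invgK; apply: generatedM => //; apply: generated_gen.
Qed.

Lemma ghom_on_eq_generated (H : groupType) (N : G -> Prop) (f g : G -> H) :
  (forall u, generated u -> N u) -> is_ghom_on N f -> is_ghom_on N g ->
  (forall i, f (x i) = g (x i)) -> forall u, generated u -> f u = g u.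
Proof.
move=> sub_N hf hg hfg u; have N1 := sub_N _ generated1.
have Nx i := sub_N _ (generated_gen i).
have NVx i := sub_N _ (generatedV (generated_gen i)).
elim=> [|w i /sub_N Nw IH|w i /sub_N Nw IH].
- by rewrite (ghom_on1 N1 hf) (ghom_on1 N1 hg).
- by rewrite hf // hg // IH hfg.
- rewrite hf // hg // IH (ghom_onV N1 (Nx i) (NVx i) hf).
  by rewrite (ghom_onV N1 (Nx i) (NVx i) hg) hfg.
Qed.

End Generation.

Section Normalizer.
Variables (G : groupType) (S : G -> Prop).

Definition normalizes (e : G) := forall u, S u -> S (e * u * e^-1).

Lemma normalizes1 : normalizes 1.
Proof. by move=> u; rewrite invg1 mulg1 mul1g. Qed.

Lemma normalizesM e e' : normalizes e -> normalizes e' -> normalizes (e * e').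
Proof. by move=> he he' u /he' /he; rewrite invgM !mulgA. Qed.

Lemma normalizesX e n : normalizes e -> normalizes (e ^+ n).
Proof.
move=> he; elim: n => [|n IH]; first exact: normalizes1.
by rewrite expgSr; apply: normalizesM.
Qed.

End Normalizer.

Lemma generated_normalizes (G : groupType) (I : Type) (x : I -> G) e :
  (forall i, generated x (e * x i * e^-1)) -> normalizes (generated x) e.
Proof.
move=> hx u; elim=> [|w i _ IH|w i _ IH].
  by rewrite mulg1 mulgV; apply: generated1.
  have -> : e * (w * x i) * e^-1 = e * w * e^-1 * (e * x i * e^-1).
    by rewrite !mulgA mulgVK.
  exact: generatedM.
have -> : e * (w * (x i)^-1) * e^-1 = e * w * e^-1 * (e * x i * e^-1)^-1.
  by rewrite !invgM invgK !mulgA mulgVK.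
by apply: generatedM => //; apply: generatedV.
Qed.

Section Powers.
Variables (G : groupType) (t : G).

Definition is_power (e : G) := exists n, e = t ^+ n \/ e = t^-1 ^+ n.

Lemma is_power_mulr e : is_power e -> is_power (e * t).
Proof.
case=> n [->|->]; first by exists n.+1; left; rewrite expgSr.
case: n => [|n]; first by exists 1%N; left; rewrite mul1g.
by exists n; right; rewrite expgSr mulgVK.
Qed.

Lemma is_power_mulVr e : is_power e -> is_power (e * t^-1).
Proof.
case=> n [->|->]; last by exists n.+1; right; rewrite expgSr.
case: n => [|n]; first by exists 1%N; right; rewrite mul1g.
by exists n; left; rewrite expgSr mulgK.
Qed.

Lemma is_power_normalizes (S : G -> Prop) e :
  normalizes S t -> normalizes S t^-1 -> is_power e -> normalizes S e.
Proof. by move=> ht htV [n [->|->]]; apply: normalizesX. Qed.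

End Powers.

Section Lamplighter.
Variable G : groupType.

Definition lamplighter := ((G -> bool) * G)%type.
HB.instance Definition _ := Choice.on lamplighter.

Definition lamp_one : lamplighter := (fun _ => false, 1).
Definition lamp_mul (x y : lamplighter) : lamplighter :=
  (fun z => x.1 z (+) y.1 (z * x.2), x.2 * y.2).
Definition lamp_inv (x : lamplighter) : lamplighter :=
  (fun z => x.1 (z * x.2^-1), x.2^-1).

Lemma lamp_mulA : associative lamp_mul.
Proof.
move=> [x1 x2] [y1 y2] [z1 z2]; rewrite /lamp_mul /=; congr (_, _).
  by apply: funext => z; rewrite mulgA addbA.
by rewrite mulgA.
Qed.

Lemma lamp_mul1 : left_id lamp_one lamp_mul.
Proof.
move=> [x1 x2]; congr (_, _); last by rewrite mul1g.
by apply: funext => z; rewrite mulg1.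
Qed.

Lemma lamp_mulg1 : right_id lamp_one lamp_mul.
Proof.
move=> [x1 x2]; congr (_, _); last by rewrite mulg1.
by apply: funext => z; rewrite addbF.
Qed.

Lemma lamp_mulV : left_inverse lamp_one lamp_inv lamp_mul.
Proof.
move=> [x1 x2]; congr (_, _); last by rewrite mulVg.
by apply: funext => z; rewrite /= addbb.
Qed.

Lemma lamp_mulgV : right_inverse lamp_one lamp_inv lamp_mul.
Proof.
move=> [x1 x2]; congr (_, _); last by rewrite mulgV.
by apply: funext => z; rewrite /= mulgK addbb.
Qed.

HB.instance Definition _ :=
  isGroup.Build lamplighter lamp_mulA lamp_mul1 lamp_mulg1 lamp_mulV lamp_mulgV.

End Lamplighter.

(* The lamps of [lamp_flip u] mark the z at which membership of z and z * u
   in P differ; when P is closed under right multiplication by the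
   generators, [lamp_flip] and [lamp_base] agree on them, so uniqueness of
   extensions forces P 1 = P u. *)
Lemma presents_Gmk_generated m k (G : groupType) (a : nat -> G) :
  presents_Gmk m k a -> forall u, generated (fun i : 'I_(m + k + 1) => a i.+1) u.
Proof.
move=> [hrel huniq] u; set P := generated _.
pose lamp_base (v : G) : lamplighter G := (fun _ => false, v).
pose lamp_flip (v : G) : lamplighter G :=
  (fun z => `[< P z >] (+) `[< P (z * v) >], v).
have hbase : is_ghom lamp_base by [].
have hflip : is_ghom lamp_flip.
  move=> x y; congr (_, _); apply: funext => z /=.
  rewrite mulgA.
  by case: `[< P z >]; case: `[< P (z * x) >]; case: `[< P (z * x * y) >].
have P_mul z i : (1 <= i <= m + k + 1)%N -> P z <-> P (z * a i).
  move=> hi; have [j ->] : exists j : 'I_(m + k + 1), i = j.+1.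
    case: i hi => [|j] hj; first lia.
    have hj' : (j < m + k + 1)%N by lia.
    by exists (Ordinal hj').
  split; first exact: generated_mulr.
  by move/(generated_mulVr j); rewrite mulgK.
have agree i : (1 <= i <= m + k + 1)%N -> lamp_base (a i) = lamp_flip (a i).
  move=> hi; congr (_, _); apply: funext => z /=.
  by rewrite (asbool_equiv_eq (P_mul z i hi)) addbb.
have := (huniq _ _ (Gmk_relations_ghom hbase hrel)).2 _ _ hbase hflip agree u.
move=> /(congr1 (fun l => l.1 1)) /=; rewrite mul1g.
case: (asboolP (P 1)) => [_ | []]; last exact: generated1.
by case: (asboolP (P u)).
Qed.

Section WreathZ.
Variable H : groupType.

Definition wreathZ := ((int -> H) * int)%type.
HB.instance Definition _ := Choice.on wreathZ.

Definition wreathZ_one : wreathZ := (fun _ => 1, 0%R).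
Definition wreathZ_mul (x y : wreathZ) : wreathZ :=
  (fun n => x.1 n * y.1 (n + x.2)%R, (x.2 + y.2)%R).
Definition wreathZ_inv (x : wreathZ) : wreathZ :=
  (fun n => (x.1 (n - x.2)%R)^-1, (- x.2)%R).

Lemma wreathZ_mulA : associative wreathZ_mul.
Proof.
move=> [x1 x2] [y1 y2] [z1 z2]; rewrite /wreathZ_mul /=; congr (_, _).
  by apply: funext => n; rewrite mulgA addrA.
by rewrite addrA.
Qed.

Lemma wreathZ_mul1 : left_id wreathZ_one wreathZ_mul.
Proof.
move=> [x1 x2]; congr (_, _); last by rewrite /= add0r.
by apply: funext => n; rewrite /= addr0 mul1g.
Qed.

Lemma wreathZ_mulg1 : right_id wreathZ_one wreathZ_mul.
Proof.
move=> [x1 x2]; congr (_, _); last by rewrite /= addr0.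
by apply: funext => n; rewrite /= mulg1.
Qed.

Lemma wreathZ_mulV : left_inverse wreathZ_one wreathZ_inv wreathZ_mul.
Proof.
move=> [x1 x2]; congr (_, _); last by rewrite /= addNr.
by apply: funext => n; rewrite /= mulVg.
Qed.

Lemma wreathZ_mulgV : right_inverse wreathZ_one wreathZ_inv wreathZ_mul.
Proof.
move=> [x1 x2]; congr (_, _); last by rewrite /= addrN.
by apply: funext => n; rewrite /= addrK mulgV.
Qed.

HB.instance Definition _ := isGroup.Build wreathZ
  wreathZ_mulA wreathZ_mul1 wreathZ_mulg1 wreathZ_mulV wreathZ_mulgV.

Lemma wreathZ_mulE (x y : wreathZ) : x * y = wreathZ_mul x y.
Proof. by []. Qed.

Lemma wreathZ_invE (x : wreathZ) : x^-1 = wreathZ_inv x.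
Proof. by []. Qed.

Lemma wreathZ_commute (u v w : int -> H) :
    (forall z, u z * w (z + 1)%R = w z * v (z + 1)%R) ->
  ((u, 1%R) : wreathZ) * ((w, 1%R) : wreathZ)
  = ((w, 1%R) : wreathZ) * ((v, 1%R) : wreathZ).
Proof. by move=> E; congr (_, _); apply: funext => z; apply: E. Qed.

End WreathZ.

Section TwistedSolution.
Variables (H : groupType) (u v : int -> H) (c : H).

Fixpoint twisted_pos (n : nat) : H :=
  if n is n'.+1 then (u n')^-1 * twisted_pos n' * v n'.+1 else c.

Fixpoint twisted_neg (n : nat) : H :=
  if n is n'.+1 then u (Negz n') * twisted_neg n' * (v (- Posz n')%R)^-1 else c.

Definition twisted_sol (z : int) : H :=
  match z with Posz n => twisted_pos n | Negz n => twisted_neg n.+1 end.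

Lemma twisted_solP z : u z * twisted_sol (z + 1)%R = twisted_sol z * v (z + 1)%R.
Proof.
case: z => n.
  have -> : (Posz n + 1 = Posz n.+1)%R by rewrite -addn1 PoszD.
  by rewrite /= !mulgA mulgV mul1g.
have -> : (Negz n + 1 = - Posz n)%R by rewrite NegzE; lia.
have -> : twisted_sol (- Posz n)%R = twisted_neg n by case: n.
by rewrite /= mulgVK.
Qed.

End TwistedSolution.

Section ChainSolution.
Variables (H : groupType) (p : nat -> nat) (c : nat -> H).
Hypothesis p_le : forall i, (p i <= i)%N.

(* Course-of-values recursion: [sol_table i q] is [chain_sol q] for q <= i. *)
Fixpoint sol_table (i : nat) : nat -> int -> H :=
  if i is i'.+1 then
    fun q => if (q <= i')%N then sol_table i' q
             else twisted_sol (sol_table i' (p i')) (sol_table i' i') (c i)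
  else fun _ _ => 1.

Definition chain_sol (q : nat) : int -> H := sol_table q q.

Lemma sol_table_stable i q : (q <= i)%N -> sol_table i q = chain_sol q.
Proof.
elim: i => [|i IH]; first by rewrite leqn0 => /eqP ->.
rewrite leq_eqVlt => /orP [/eqP -> // | ]; rewrite ltnS => hq.
by rewrite /= hq IH.
Qed.

Lemma chain_solS i :
  chain_sol i.+1 = twisted_sol (chain_sol (p i)) (chain_sol i) (c i.+1).
Proof. by rewrite /chain_sol /= ltnn !sol_table_stable. Qed.

Lemma chain_sol_rel i z :
  chain_sol (p i) z * chain_sol i.+1 (z + 1)%R
  = chain_sol i.+1 z * chain_sol i (z + 1)%R.
Proof. by rewrite chain_solS twisted_solP. Qed.

Lemma chain_sol0 i : chain_sol i.+1 0 = c i.+1.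
Proof. by rewrite chain_solS. Qed.

End ChainSolution.

Section Kernel.
Variables (m k : nat) (G : groupType) (a : nat -> G).
Hypothesis hG : presents_Gmk m k a.
Variable phi : G -> int.
Hypothesis phiM : forall x y, phi (x * y) = (phi x + phi y)%R.
Hypothesis phi_gen : forall i, (1 <= i <= m + k + 1)%N -> phi (a i) = 1%R.

Local Notation t := (a 1).

Definition kernel_basis (o : 'I_(m + k)) : G := a o.+2 * t^-1.

Local Notation X := (generated kernel_basis).

Lemma phi_t : phi t = 1%R.
Proof. by apply: phi_gen; lia. Qed.

Lemma kernel_basis_ker o : phi (kernel_basis o) = 0%R.
Proof.
rewrite phiM ahomV // phi_t phi_gen ?subrr //.
by have := ltn_ord o; lia.
Qed.

Lemma generated_ker u : X u -> phi u = 0%R.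
Proof.
elim=> [|w o _ IH|w o _ IH]; first exact: ahom1.
  by rewrite phiM IH kernel_basis_ker.
by rewrite phiM IH ahomV // kernel_basis_ker.
Qed.

Lemma phi_surj z : exists g, phi g = z.
Proof.
case: z => n; first by exists (t ^+ n); rewrite ahomX // phi_t natz.
by exists (t^-1 ^+ n.+1); rewrite ahomX // ahomV // phi_t mulNrn natz NegzE.
Qed.

Lemma generated_gen_t l : (1 <= l <= m + k + 1)%N -> X (a l * t^-1).
Proof.
case: l => [|[|l]] hl; first by [].
  by rewrite mulgV; apply: generated1.
have hl' : (l < m + k)%N by lia.
exact: (generated_gen kernel_basis (Ordinal hl')).
Qed.

(* Strong induction on l: the relation a_{p i} a_{i+1} = a_{i+1} a_i
   expresses the conjugates of a_{i+1} t^-1 through those of a_i t^-1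
   (by t) and of a_{p i} t^-1 (by t^-1). *)
Lemma generated_conj_t l : (1 <= l <= m + k + 1)%N ->
  X (t * (a l * t^-1) * t^-1) /\ X (t^-1 * (a l * t^-1) * t).
Proof.
elim/ltn_ind: l => -[//|[|i]] IH hl.
  by rewrite mulgV !mulg1 mulgV mulVg; split; apply: generated1.
have hi : (1 <= i.+1 <= m + k)%N by lia.
have rel := (Gmk_relationsP m k a).1 hG.1 _ hi.
set ap := a (partner m i.+1) in rel; set al := a i.+2 in rel *.
set al1 := a i.+1 in rel.
have p_le := partner_le m i.+1; have p_gt0 := partner_gt0 m (ltn0Sn i).
split.
  have -> : t * (al * t^-1) * t^-1
          = (ap * t^-1)^-1 * (al * t^-1) * (t * (al1 * t^-1) * t^-1).
    by rewrite !invgM !invgK !mulgA mulgVK -(mulgA _ al al1) -rel mulgA mulgVK.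
  apply: generatedM; first apply: generatedM.
  - by apply/generatedV/generated_gen_t; lia.
  - by apply: generated_gen_t; lia.
  - by apply: (IH i.+1 (ltnSn _) _).1; lia.
have -> : t^-1 * (al * t^-1) * t
        = t^-1 * (ap * t^-1) * t * (al * t^-1) * (al1 * t^-1)^-1.
  by rewrite !invgM !invgK !mulgA !mulgVK -(mulgA _ ap al) rel mulgA mulgK.
apply: generatedM; first apply: generatedM.
- by apply: (IH (partner m i.+1) _ _).2; lia.
- by apply: generated_gen_t; lia.
- by apply/generatedV/generated_gen_t; lia.
Qed.

Lemma normalizes_t : normalizes X t.
Proof.
apply: generated_normalizes => o; have o_lt := ltn_ord o.
by have [] := @generated_conj_t o.+2 ltac:(lia).
Qed.

Lemma normalizes_tV : normalizes X t^-1.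
Proof.
apply: generated_normalizes => o; have o_lt := ltn_ord o.
by rewrite invgK; have [] := @generated_conj_t o.+2 ltac:(lia).
Qed.

Lemma kernel_decomposition u : exists w e, [/\ X w, is_power t e & u = w * e].
Proof.
have normalizes_X := is_power_normalizes normalizes_t normalizes_tV.
elim: (presents_Gmk_generated hG u)
  => [|{}u i _ [w [e [hw he ->]]]|{}u i _ [w [e [hw he ->]]]].
- by exists 1, 1; split; [apply: generated1 | exists 0%N; left | rewrite mulg1].
- have hy : X (a i.+1 * t^-1) by apply: generated_gen_t; have := ltn_ord i; lia.
  exists (w * (e * (a i.+1 * t^-1) * e^-1)), (e * t); split.
  + exact/generatedM/normalizes_X.
  + exact: is_power_mulr.
  + by rewrite !mulgA !mulgVK.
- have hy : X (a i.+1 * t^-1) by apply: generated_gen_t; have := ltn_ord i; lia.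
  exists (w * (e * t^-1 * (a i.+1 * t^-1)^-1 * (e * t^-1)^-1)), (e * t^-1); split.
  + exact/generatedM/(normalizes_X _ (is_power_mulVr he))/generatedV.
  + exact: is_power_mulVr.
  + by rewrite !invgM !invgK !mulgA !mulgVK mulgK.
Qed.

Lemma kernel_generated u : phi u = 0%R -> X u.
Proof.
have [w [e [hw [n e_pow] ->]]] := kernel_decomposition u.
rewrite phiM generated_ker // add0r => phi_e.
suff -> : e = 1 by rewrite mulg1.
case: e_pow phi_e => -> ; rewrite ahomX // ?ahomV // phi_t ?mulNrn natz => phi_e.
all: by have -> : n = 0%N by lia.
Qed.

Lemma kernel_extension (H : groupType) (b : 'I_(m + k) -> H) :
  exists f : G -> H,
    is_ghom_on (fun g => phi g = 0%R) f /\ forall o, f (kernel_basis o) = b o.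
Proof.
(* The prescribed values g_l(0); c 1 = 1 makes x_o = a_{o+2} t^-1 go to b_o. *)
pose c (l : nat) : H := if l is l'.+2 then oapp b 1 (insub l') else 1.
pose g := chain_sol (partner m) c.
have hrel : Gmk_relations m k (fun l => (g l, 1%R) : wreathZ H).
  apply/Gmk_relationsP => i _; apply: wreathZ_commute => z.
  exact: (chain_sol_rel _ (partner_le m)).
have [[F [hF hFa]] _] := hG.2 _ _ hrel.
have F_phi u : (F u).2 = phi u.
  elim: (presents_Gmk_generated hG u) => [|{}u i _ IH|{}u i _ IH].
  - by rewrite ghom1 // (ahom1 phiM).
  - have hi : (1 <= i.+1 <= m + k + 1)%N by have := ltn_ord i; lia.
    by rewrite hF wreathZ_mulE phiM hFa // phi_gen //= IH.
  - have hi : (1 <= i.+1 <= m + k + 1)%N by have := ltn_ord i; lia.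
    rewrite hF (ghomV _ hF) wreathZ_mulE wreathZ_invE phiM (ahomV phiM).
    by rewrite hFa // phi_gen //= IH.
exists (fun u => (F u).1 0%R); split.
  by move=> x y hx _; rewrite hF /= F_phi hx add0r.
move=> o; have o_lt := ltn_ord o.
rewrite /kernel_basis hF (ghomV _ hF) !hFa /=; try lia.
by rewrite add0r subrr /g !(chain_sol0 _ (partner_le m)) /c valK invg1 mulg1.
Qed.

End Kernel.

Local Close Scope group_scope.

Theorem proposition5p3 (m k : nat) (hm : (1 <= m)%N) (hk : (k <= m)%N)
    (G : groupType) (a : nat -> G) (hG : presents_Gmk m k a) :
  (* the induced map f_* : G_{m,k} -> Z sending every a_i to 1 exists *)
  (exists phi : G -> int,
      (forall x y : G, phi (x * y)%g = (phi x + phi y)%R) /\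
      (forall i, (1 <= i <= m + k + 1)%N -> phi (a i) = 1%R)) /\
  (* and for it, 1 -> F_{m+k} -> G_{m,k} -> Z -> 1 is exact *)
  (forall phi : G -> int,
      (forall x y : G, phi (x * y)%g = (phi x + phi y)%R) ->
      (forall i, (1 <= i <= m + k + 1)%N -> phi (a i) = 1%R) ->
      (forall z : int, exists g : G, phi g = z) /\
      exists x : 'I_(m + k) -> G,
        free_basis_of (fun g : G => phi g = 0%R) x).
Proof.
(* The argument does not need [1 <= m] nor [k <= m]. *)
split.
  pose shift : wreathZ G := (fun _ => 1%g, 1%R).
  have [[F [hF hFa]] _] := hG.2 _ _ (Gmk_relations_const m k shift).
  exists (fun u => (F u).2); split; first by move=> x y; rewrite hF.
  by move=> i hi; rewrite hFa.
move=> phi phiM phi_gen; split; first exact: phi_surj phiM phi_gen.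
exists (kernel_basis a); split; first exact: kernel_basis_ker phiM phi_gen.
move=> H b; split; first exact: (kernel_extension hG phiM phi_gen b).
move=> f g hf hg hfg u /(kernel_generated hG phiM phi_gen).
apply: (ghom_on_eq_generated (N := fun v => phi v = 0%R) _ hf hg hfg).
exact: (generated_ker phiM phi_gen).
Qed.
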